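(* Let $q\in(0,1)$ be a constant. Let $N\sim\mathrm{B}(M,\alpha)$ and $N_1\sim\mathrm{B}(M-1,\alpha)$ be two statistically independent binomial random variables with $M\ge 2$ and $\alpha\in(0,q]\cup\{1\}$. Then \[ \Pr\{N\ge N_1+1 \mid N\ge 1\}\ \ge\ \tfrac12\big[1-1/\sqrt{2\pi}\big]+o_M(1), \] where $o_M(1)$ depends only on $q$ and $M$ (not on $\alpha$) and tends to $0$ as $M\to+\infty$.
   Context: $\mathrm{B}(M,\alpha)$ denotes the binomial distribution with $M$ trials and success probability $\alpha$. *)

From HB Require Import structures.
From mathcomp Require Import all_boot all_order all_algebra.
From mathcomp Require Import all_classical all_reals all_analysis.
Set Implicit Arguments. Unset Strict Implicit. Unset Printing Implicit Defensive.
Import Order.TTheory GRing.Theory Num.Theory.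
Local Open Scope ring_scope.

Definition binom_pmf {R : realType} (M : nat) (a : R) (k : nat) : R :=
  ('C(M, k))%:R * a ^+ k * (1 - a) ^+ (M - k).

(* Joint law of independent N ~ B(M,a), N1 ~ B(M-1,a):
   probability of the event {(N,N1) | P N N1}. *)
Definition indep_binom_prob {R : realType} (M : nat) (a : R)
    (P : nat -> nat -> bool) : R :=
  \sum_(k < M.+1) \sum_(j < M) (if P k j then binom_pmf M a k * binom_pmf M.-1 a j else 0).

Definition cond_prob_lemma6 {R : realType} (M : nat) (a : R) : R :=
  indep_binom_prob M a (fun k j => (j.+1 <= k)%N && (1 <= k)%N)
  / indep_binom_prob M a (fun k j => (1 <= k)%N).

From HB Require Import structures.
From mathcomp Require Import all_boot all_order all_algebra.
From mathcomp Require Import all_classical all_reals all_analysis.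
From mathcomp Require Import ring lra zify.
Import Order.TTheory GRing.Theory Num.Theory.
Import numFieldNormedType.Exports.
Local Open Scope classical_set_scope.
Local Open Scope ring_scope.

(* Write N = N' + xi with N' ~ B(M-1, a) and xi ~ Bernoulli(a), independent
   of N1 ~ B(M-1, a).  Since {N >= N1 + 1} is contained in {N >= 1}, the
   conditional probability is (Pr{N' > N1} + a Pr{N' = N1}) / (1 - (1-a)^M),
   and by symmetry Pr{N' > N1} = (1 - s) / 2, where s = sum_k p_k^2 is the
   collision probability of B(M-1, a).  Splitting off the last trial gives
   s_(n+1) <= (1 - 3a(1-a)) s_n + a(1-a), whence 3 s_n <= 1 + 2 (1 - 3a(1-a))^n.
   This bounds the conditional probability below by 1/3 for every M >= 1 and
   a in (0, 1], and 1/3 >= (1 - 1/sqrt(2 pi)) / 2 because 2 pi < 9; so the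
   o_M(1) term can be taken to be 0. *)

Definition mass_lt {R : pzSemiRingType} (m : nat) (p : nat -> R) : R :=
  \sum_(k < m) \sum_(j < m) (if (j < k)%N then p k * p j else 0).

Definition mass_eq {R : pzSemiRingType} (m : nat) (p : nat -> R) : R :=
  \sum_(k < m) p k ^+ 2.

Lemma sqr_sum_mass {R : comPzSemiRingType} (m : nat) (p : nat -> R) :
  (\sum_(k < m) p k) ^+ 2 = 2 * mass_lt m p + mass_eq m p.
Proof.
have split_pair (k j : 'I_m) : p k * p j =
    (if (j < k)%N then p k * p j else 0) + (if (k < j)%N then p j * p k else 0)
    + (if j == k :> nat then p k ^+ 2 else 0).
  by case: ltngtP => [||/val_inj ->]; rewrite ?addr0 ?add0r // (mulrC, expr2).
rewrite expr2 mulr_suml.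
under eq_bigr do rewrite mulr_sumr.
under eq_bigr do under eq_bigr do rewrite split_pair.
under eq_bigr do rewrite !big_split /=.
rewrite !big_split /= [X in _ + X + _]exchange_big /= mulr2n mulrDl mul1r.
congr (_ + _); apply: eq_bigr => k _.
by rewrite -big_mkcond /= (big_pred1 k).
Qed.

Lemma sum_adjacent_le_mass_lt {R : numDomainType} (m : nat) (p : nat -> R) :
  (forall k, 0 <= p k) -> \sum_(k < m) p k.+1 * p k <= mass_lt m.+1 p.
Proof.
move=> p_ge0; rewrite /mass_lt big_ord_recl big1_eq add0r.
apply: ler_sum => k _.
rewrite (bigD1 (inord k)) //= inordK; last by rewrite ltnS ltnW.
rewrite /bump /= add1n ltnSn lerDl.
by apply: sumr_ge0 => j _; case: ifP => // _; apply: mulr_ge0.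
Qed.

Section Binomial.
Variables (R : realType) (a : R).

Lemma binom_pmf_small (n k : nat) : (n < k)%N -> binom_pmf n a k = 0.
Proof. by move=> lt_nk; rewrite /binom_pmf bin_small // !mul0r. Qed.

Lemma binom_pmf0 (n : nat) : binom_pmf n a 0 = (1 - a) ^+ n.
Proof. by rewrite /binom_pmf bin0 expr0 subn0 !mul1r. Qed.

Lemma binom_pmfSS (n k : nat) :
  binom_pmf n.+1 a k.+1 = (1 - a) * binom_pmf n a k.+1 + a * binom_pmf n a k.
Proof.
rewrite /binom_pmf binS natrD subSS.
case: (ltnP n k.+1) => [lt_nk|le_kn].
  rewrite bin_small // !mul0r mulr0 add0r.
  have -> : (n - k = 0)%N by lia.
  by rewrite exprS; ring.
have -> : (n - k = (n - k.+1).+1)%N by lia.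
by rewrite !exprS; ring.
Qed.

Lemma binom_pmf_ge0 (n k : nat) : 0 <= a <= 1 -> 0 <= binom_pmf n a k.
Proof. by move=> /andP[a_ge0 a_le1]; rewrite !mulr_ge0 ?exprn_ge0 ?subr_ge0. Qed.

Lemma sum_binom_pmf (n : nat) : \sum_(k < n.+1) binom_pmf n a k = 1.
Proof.
rewrite -(expr1n _ n) -{1}(subrK a 1) exprDn.
by apply: eq_bigr => k _; rewrite /binom_pmf; ring.
Qed.

Lemma mass_lt_binom (n : nat) :
  2 * mass_lt n.+1 (binom_pmf n a) = 1 - mass_eq n.+1 (binom_pmf n a).
Proof.
have := sqr_sum_mass n.+1 (binom_pmf n a).
by rewrite sum_binom_pmf expr1n => sq; rewrite [in RHS]sq addrK.
Qed.

Lemma mass_eq_binomS (n : nat) : mass_eq n.+2 (binom_pmf n.+1 a) =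
  ((1 - a) ^+ 2 + a ^+ 2) * mass_eq n.+1 (binom_pmf n a)
  + 2 * a * (1 - a) * \sum_(k < n) binom_pmf n a k.+1 * binom_pmf n a k.
Proof.
set p := binom_pmf n a.
have shift : \sum_(k < n.+1) p k.+1 ^+ 2 = mass_eq n.+1 p - p 0%N ^+ 2.
  rewrite /mass_eq big_ord_recr /= /p binom_pmf_small // expr0n addr0.
  by rewrite big_ord_recl addrC addKr.
have trim : \sum_(k < n.+1) p k.+1 * p k = \sum_(k < n) p k.+1 * p k.
  by rewrite big_ord_recr /= /p binom_pmf_small // mul0r addr0.
have expand (k : nat) : ((1 - a) * p k.+1 + a * p k) ^+ 2 =
    (1 - a) ^+ 2 * p k.+1 ^+ 2 + a ^+ 2 * p k ^+ 2 + 2 * a * (1 - a) * (p k.+1 * p k).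
  by ring.
rewrite /mass_eq big_ord_recl /= !binom_pmf0 -trim.
under eq_bigr do rewrite /bump /= add1n binom_pmfSS -/p expand.
rewrite !big_split /= -!mulr_sumr shift -/(mass_eq n.+1 p) /p binom_pmf0.
by rewrite [(1 - a) ^+ n.+1]exprS; ring.
Qed.

Lemma mass_eq_binomS_le (n : nat) : 0 <= a <= 1 ->
  mass_eq n.+2 (binom_pmf n.+1 a)
    <= (1 - 3 * a * (1 - a)) * mass_eq n.+1 (binom_pmf n a) + a * (1 - a).
Proof.
move=> a01; have /andP[a_ge0 a_le1] := a01.
have adj := @sum_adjacent_le_mass_lt _ n _ (fun k => binom_pmf_ge0 n k a01).
have sym := mass_lt_binom n.
have var_ge0 : 0 <= a * (1 - a) by rewrite mulr_ge0 ?subr_ge0.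
rewrite mass_eq_binomS.
set s := mass_eq _ _ in sym *; set A := mass_lt _ _ in adj sym.
set t := \sum_(k < n) _ in adj *.
have : a * (1 - a) * t <= a * (1 - a) * A by rewrite ler_wpM2l.
nra.
Qed.

Lemma mass_eq_binom_le (n : nat) : 0 <= a <= 1 ->
  3 * mass_eq n.+1 (binom_pmf n a) <= 1 + 2 * (1 - 3 * a * (1 - a)) ^+ n.
Proof.
move=> a01; have /andP[a_ge0 a_le1] := a01.
have rate_ge0 : 0 <= 1 - 3 * a * (1 - a) by nra.
elim: n => [|n IHn].
  by rewrite /mass_eq big_ord1 binom_pmf0 !expr0 expr1n; lra.
apply: le_trans (_ : 3 * ((1 - 3 * a * (1 - a)) * mass_eq n.+1 (binom_pmf n a)
                          + a * (1 - a)) <= _).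
  by rewrite ler_pM2l ?mass_eq_binomS_le.
rewrite exprS.
have := ler_wpM2l rate_ge0 IHn.
lra.
Qed.

Lemma mass_eq_binom_le_tail (n : nat) : 0 < a <= 1 ->
  (1 - 2 * a) * (3 * mass_eq n.+1 (binom_pmf n a)) <= 1 + 2 * (1 - a) ^+ n.+1.
Proof.
move=> /andP[a_gt0 a_le1]; have a01 : 0 <= a <= 1 by rewrite ltW.
have s_ge0 : 0 <= mass_eq n.+1 (binom_pmf n a) by apply: sumr_ge0 => k _; apply: sqr_ge0.
have tail_ge0 : 0 <= (1 - a) ^+ n by rewrite exprn_ge0 ?subr_ge0.
rewrite exprS; have [a_ge_half|a_lt_half] := lerP (2^-1) a; first by nra.
have rate_le : (1 - 3 * a * (1 - a)) ^+ n <= (1 - a) ^+ n.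
  by apply: lerXn2r; rewrite ?nnegrE; nra.
have : (1 - 2 * a) * (3 * mass_eq n.+1 (binom_pmf n a))
         <= (1 - 2 * a) * (1 + 2 * (1 - 3 * a * (1 - a)) ^+ n).
  by rewrite ler_wpM2l ?mass_eq_binom_le //; lra.
nra.
Qed.

Lemma indep_binom_prob_pos (n : nat) :
  indep_binom_prob n.+1 a (fun k _ => (1 <= k)%N) = 1 - (1 - a) ^+ n.+1.
Proof.
have total := sum_binom_pmf n.+1.
rewrite big_ord_recl binom_pmf0 in total.
apply: (addrI ((1 - a) ^+ n.+1)); rewrite [in RHS]addrC subrK -[in RHS]total.
rewrite /indep_binom_prob [in LHS]big_ord_recl /= big1_eq add0r; congr (_ + _).
apply: eq_bigr => k _.
by rewrite -[RHS]mulr1 -(sum_binom_pmf n) mulr_sumr.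
Qed.

Lemma indep_binom_prob_gt (n : nat) :
  indep_binom_prob n.+1 a (fun k j => (j.+1 <= k)%N && (1 <= k)%N)
  = mass_lt n.+1 (binom_pmf n a) + a * mass_eq n.+1 (binom_pmf n a).
Proof.
set p := binom_pmf n a.
have last_trial (i j : 'I_n.+1) :
    (if (j < bump 0 i)%N && (0 < bump 0 i)%N
     then binom_pmf n.+1 a (bump 0 i) * p j else 0)
    = (1 - a) * (if (j < i.+1)%N then p i.+1 * p j else 0)
      + a * ((if (j < i)%N then p i * p j else 0)
             + (if j == i :> nat then p i ^+ 2 else 0)).
  rewrite /bump /= add1n ltnS andbT binom_pmfSS -/p.
  by case: ltngtP => [_|_|eq_ji]; rewrite ?expr2 ?eq_ji; ring.
have diag : \sum_(i < n.+1) \sum_(j < n.+1)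
    (if j == i :> nat then p i ^+ 2 else 0) = mass_eq n.+1 p.
  by apply: eq_bigr => i _; rewrite -big_mkcond (big_pred1 i).
have shifted : \sum_(i < n.+1) \sum_(j < n.+1)
    (if (j < i.+1)%N then p i.+1 * p j else 0) = mass_lt n.+1 p.
  rewrite /mass_lt big_ord_recr [in RHS]big_ord_recl big1_eq add0r /=.
  rewrite [X in _ + X]big1 ?addr0 // => j _.
  by rewrite /p binom_pmf_small // mul0r; case: ifP.
rewrite /indep_binom_prob big_ord_recl /= big1_eq add0r.
under eq_bigr do under eq_bigr do rewrite last_trial.
under eq_bigr do rewrite big_split /= -!mulr_sumr big_split /=.
rewrite big_split /= -!mulr_sumr big_split /= -/(mass_lt n.+1 p) diag shifted.
ring.
Qed.

Lemma cond_prob_lemma6_ge_third (n : nat) : 0 < a <= 1 ->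
  3^-1 <= cond_prob_lemma6 n.+1 a.
Proof.
move=> a_range; have /andP[a_gt0 a_le1] := a_range.
have pos_gt0 : 0 < 1 - (1 - a) ^+ n.+1.
  by rewrite subr_gt0 exprn_ilt1 ?subr_ge0 // ltrBlDr ltrDl.
rewrite /cond_prob_lemma6 indep_binom_prob_gt indep_binom_prob_pos ler_pdivlMr //.
have := mass_lt_binom n; have := mass_eq_binom_le_tail n a_range.
set s := mass_eq _ _; set A := mass_lt _ _; set B := (1 - a) ^+ n.+1.
nra.
Qed.

End Binomial.

Lemma sqrt_2pi_le3 {R : realType} : Num.sqrt (2 * pi) <= 3 :> R.
Proof.
have pi_lt4 : pi < 4 :> R by have := @pihalf_lt2 R; lra.
rewrite -[3 in leRHS]ger0_norm // -sqrtr_sqr ler_sqrt; lra.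
Qed.

Theorem lemma6 (R : realType) (q : R) (hq0 : 0 < q) (hq1 : q < 1) :
  exists f : nat -> R, f @ \oo --> (0 : R) /\
    forall (M : nat) (a : R), (2 <= M)%N -> ((0 < a /\ a <= q) \/ a = 1) ->
      cond_prob_lemma6 M a >= 2^-1 * (1 - (Num.sqrt (2 * pi))^-1) + f M.
Proof.
exists (fun=> 0); split; first exact: cvg_cst.
move=> [|n] a // _ a_range; rewrite addr0.
have a01 : 0 < a <= 1.
  by case: a_range => [[a_gt0 a_le_q]|->]; apply/andP; split; lra.
apply: le_trans _ (@cond_prob_lemma6_ge_third R a n a01).
have sqrt_gt0 : 0 < Num.sqrt (2 * pi) :> R by rewrite sqrtr_gt0 mulr_gt0 ?pi_gt0.
have : 3^-1 <= (Num.sqrt (2 * pi))^-1 :> R by rewrite lef_pV2 ?posrE ?sqrt_2pi_le3.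
lra.
Qed.
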